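(* Assume the standing setup below. Let $\theta\in\mathbb{R}^{|\mathcal{V}|}$ with $\theta_i\ge0$ for all $i$, let $\mathbf{x}\in\mathcal{S}_\rho$, and let $(i,j)\in\mathcal{A}$ satisfy $u_i(\theta_i)\ge u_j(0)$. If $\mathbf{x}_i\in[0,\theta_i]$, then $\delta_{ij}(\mathbf{x})=0$ both for SSD and for NBRD. If moreover $\mathbf{z}^*_i(\mathbf{x})\in[0,\theta_i]$, where $\mathbf{z}^*(\mathbf{x})$ is the (unique) $\mathbf{z}$-part of any optimizer of $\mathbf{P}_3$, then $\mathbf{d}^*_{ij}=0$ for every optimizer $(\mathbf{z}^*,\mathbf{d}^* )$ of $\mathbf{P}_3$ (i.e. $\delta_{ij}(\mathbf{x})=0$ for NRPM as well).
   Context: Standing setup: $\mathcal{G}=(\mathcal{V},\mathcal{E})$ is a finite, connected, undirected graph; $\mathcal{N}^i$ is the neighbour set of $i$ and $\overline{\mathcal{N}}^i=\mathcal{N}^i\cup\{i\}$; $\mathcal{A}=\bigcup_{\{i,j\}\in\mathcal{E}}\{(i,j),(j,i)\}$ is the associated arc set. For $\rho\ge0$, $\mathcal{S}_\rho=\{\mathbf{x}\ge0:\sum_i\mathbf{x}_i=\rho\}$. For each node $i$, $p_i:[0,\infty)\to\mathbb{R}$ is twice continuously differentiable and strictly concave, and $u_i:=p_i'$ (right derivative at $0$), strictly decreasing. $U(\mathbf{x})=\sum_i[p_i(\mathbf{x}_i)-p_i(0)]$. All three dynamics have the form $\dot{\mathbf{x}}_i=\sum_{j\in\mathcal{N}^i}(\delta_{ji}(\mathbf{x})-\delta_{ij}(\mathbf{x}))$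 with flows $\delta_{ij}\ge0$ on arcs $(i,j)\in\mathcal{A}$. SSD (stratified Smith dynamics): $\delta_{ij}=\max\{u_j(\mathbf{x}_j)(\mathbf{x}_i-y_{ij})-(p_i(\mathbf{x}_i)-p_i(y_{ij})),0\}$, where $y_{ij}=0$ if $u_j(\mathbf{x}_j)\ge u_i(0)$, $y_{ij}=\mathbf{x}_i$ if $u_j(\mathbf{x}_j)\le u_i(\mathbf{x}_i)$, and otherwise $y_{ij}$ is the unique $y\in(0,\mathbf{x}_i)$ with $u_i(y)=u_j(\mathbf{x}_j)$. NBRD (nodal best response dynamics): $\delta_{ij}=\mathbf{d}^*_{ij}$, where $\{\mathbf{d}^*_{ij}\}_{j\in\overline{\mathcal{N}}^i}$ is the optimizer of $\mathbf{P}_2^i$: maximize $\sum_{j\in\mathcal{N}^i}[p_j(\mathbf{x}_j+\mathbf{d}_{ij})-p_j(\mathbf{x}_j)]+[p_i(\mathbf{d}_{ii})-p_i(0)]$ subject to $\mathbf{d}_{ii}+\sum_{j\in\mathcal{N}^i}\mathbf{d}_{ij}=\mathbf{x}_i$, $\mathbf{d}_{ij}\ge0$ for $j\in\overline{\mathcal{N}}^i$. NRPM (network restricted payoff maximization): $\mathbf{P}_3$ is: maximize $U(\mathbf{z})$ over $(\mathbf{z},\mathbf{d})$ subject to $\mathbf{z}_i=\mathbf{x}_i+\sum_{j\in\overline{\mathcal{N}}^i}(\mathbf{d}_{ji}-\mathbf{d}_{ij})$ for all $i$, $\sum_{j\in\overline{\mathcal{N}}^i}\mathbf{d}_{ij}=\mathbf{x}_i$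 for all $i$, and $\mathbf{d}_{ij}\ge0$ for all $(i,j)\in\mathcal{A}\cup\{(i,i):i\in\mathcal{V}\}$. The $\mathbf{z}$-component $\mathbf{z}^*(\mathbf{x})$ of optimizers is unique, the NRPM dynamics is $\dot{\mathbf{x}}=\mathbf{z}^*(\mathbf{x})-\mathbf{x}$, and its arc flows are $\delta_{ij}=\mathbf{d}^*_{ij}$ for an optimizer $(\mathbf{z}^*,\mathbf{d}^* )$. *)

From HB Require Import structures.
From mathcomp Require Import all_boot all_order all_algebra.
From mathcomp Require Import all_classical all_reals all_analysis.
Set Implicit Arguments. Unset Strict Implicit. Unset Printing Implicit Defensive.
Import Order.TTheory GRing.Theory Num.Theory.
Import numFieldNormedType.Exports.
Local Open Scope classical_set_scope.
Local Open Scope ring_scope.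

Section Defs.
Variable R : realType.

(* A finite, connected, undirected (simple) graph given by a symmetric,
   irreflexive adjacency relation e on a finite node type V.  The arc set
   A consists of the ordered pairs (i,j) with e i j. *)
Definition graph_ok (V : finType) (e : rel V) : Prop :=
  symmetric e /\ irreflexive e /\ (forall i j : V, connect e i j).

Definition deriv_on_nonneg (f f' : R -> R) : Prop :=
  (forall x : R, 0 < x -> is_derive x 1 f (f' x)) /\
  ((fun h : R => h^-1 * (f h - f 0)) @ 0^'+ --> f' 0).

Definition C2_nonneg_with_deriv (p u : R -> R) : Prop :=
  deriv_on_nonneg p u /\
  exists u2 : R -> R, deriv_on_nonneg u u2 /\
                      {within [set x : R | 0 <= x], continuous u2}.

Definition strictly_concave_nonneg (p : R -> R) : Prop :=
  forall x y t : R, 0 <= x -> 0 <= y -> x != y -> 0 < t < 1 ->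
    t * p x + (1 - t) * p y < p (t * x + (1 - t) * y).

Definition strictly_decr_nonneg (u : R -> R) : Prop :=
  forall x y : R, 0 <= x -> x < y -> u y < u x.

Definition in_simplex (V : finType) (rho : R) (x : V -> R) : Prop :=
  (forall i, 0 <= x i) /\ \sum_(i : V) x i = rho.

Definition ssd_y (V : finType) (u : V -> R -> R) (x : V -> R) (i j : V) : R :=
  if u i 0 <= u j (x j) then 0
  else if u j (x j) <= u i (x i) then x i
  else xget 0 [set y : R | 0 < y < x i /\ u i y = u j (x j)].

Definition ssd_flow (V : finType) (p u : V -> R -> R) (x : V -> R) (i j : V) : R :=
  let y := ssd_y u x i j in
  Num.max (u j (x j) * (x i - y) - (p i (x i) - p i y)) 0.

(* decision variable d : V -> R; only d j for j in the closed neighbourhood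
   of i matter (d i plays the role of d_ii). *)
Definition P2_feasible (V : finType) (e : rel V) (x : V -> R) (i : V) (d : V -> R) : Prop :=
  (forall j, (e i j || (j == i)) -> 0 <= d j) /\
  d i + \sum_(j | e i j) d j = x i.

Definition P2_obj (V : finType) (e : rel V) (p : V -> R -> R) (x : V -> R) (i : V)
  (d : V -> R) : R :=
  \sum_(j | e i j) (p j (x j + d j) - p j (x j)) + (p i (d i) - p i 0).

Definition P2_optimizer (V : finType) (e : rel V) (p : V -> R -> R) (x : V -> R)
  (i : V) (d : V -> R) : Prop :=
  P2_feasible e x i d /\
  forall d' : V -> R, P2_feasible e x i d' -> P2_obj e p x i d' <= P2_obj e p x i d.

Definition Uobj (V : finType) (p : V -> R -> R) (z : V -> R) : R :=
  \sum_(i : V) (p i (z i) - p i 0).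

Definition P3_feasible (V : finType) (e : rel V) (x : V -> R)
  (z : V -> R) (d : V -> V -> R) : Prop :=
  (forall i, z i = x i + \sum_(j | e i j || (j == i)) (d j i - d i j)) /\
  (forall i, \sum_(j | e i j || (j == i)) d i j = x i) /\
  (forall i j, (e i j || (j == i)) -> 0 <= d i j).

Definition P3_optimizer (V : finType) (e : rel V) (p : V -> R -> R) (x : V -> R)
  (z : V -> R) (d : V -> V -> R) : Prop :=
  P3_feasible e x z d /\
  forall z' d', P3_feasible e x z' d' -> Uobj p z' <= Uobj p z.

End Defs.

From HB Require Import structures.
From mathcomp Require Import all_boot all_order all_algebra.
From mathcomp Require Import all_classical all_reals all_analysis.
From mathcomp Require Import ring lra.
Import Order.TTheory GRing.Theory Num.Theory.
Import numFieldNormedType.Exports.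
Set Implicit Arguments. Unset Strict Implicit.
Local Open Scope ring_scope.

(* The SSD claim is read off the definition of the flow: once
   u_j(x_j) <= u_j(0) <= u_i(theta_i) <= u_i(x_i), the flow formula collapses
   to max(0, 0) = 0.
   The NBRD and NRPM claims share one analytic fact (profitable_retraction):
   if u_j(0) <= u_i(a) and an amount eps > 0 sits at level c >= eps on node j,
   then for some 0 < h < eps, taking h away from j loses less payoff than
   giving it to node i at level a gains.  It follows from strict concavity:
   the increments of p_j are bounded by h u_j(c - h) <= h u_j(eps/2), while
   the difference quotients of p_i at a tend to u_i(a) > u_j(eps/2).
   An optimizer of P_2^i (resp. P_3) with positive flow on (i,j) can then be
   modified by moving h of that flow back to i (the operations transfer and
   retract_arc below); this stays feasible and strictly increases the
   objective, a contradiction. *)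

Section RealFunctions.
Local Open Scope classical_set_scope.
Local Open Scope ring_scope.
Variable R : realType.
Implicit Types (p u : R -> R) (a c h : R).

Lemma concave_le p : strictly_concave_nonneg p ->
  forall x y t : R, 0 <= x -> 0 <= y -> 0 <= t <= 1 ->
    t * p x + (1 - t) * p y <= p (t * x + (1 - t) * y).
Proof.
move=> hc x y t hx hy /andP[t0 t1].
have [->|xy] := eqVneq x y; first by rewrite -!mulrDl subrKC !mul1r.
have [<-|t0'] := eqVneq 0 t; first by rewrite !mul0r !subr0 !mul1r !add0r.
have [->|t1'] := eqVneq t 1; first by rewrite subrr !mul0r !mul1r !addr0.
by apply/ltW/hc => //; rewrite lt_neqAle t0' t0 lt_neqAle t1' t1.
Qed.

Lemma decr_le u : strictly_decr_nonneg u ->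
  forall x y : R, 0 <= x -> x <= y -> u y <= u x.
Proof.
move=> hu x y x0; rewrite le_eqVlt => /predU1P[->//|xy].
exact/ltW/hu.
Qed.

Lemma right_quotient_cvg p u : deriv_on_nonneg p u -> forall a, 0 <= a ->
  (fun h => h^-1 * (p (a + h) - p a)) @ 0^'+ --> u a.
Proof.
move=> [hd h0] a; rewrite le_eqVlt => /predU1P[<-|a0].
  by under eq_fun do rewrite add0r.
have [hder <-] := hd a a0.
have right_sub : 0^'+ `=>` (0 : R)^'.
  by apply: within_subset => x /= hx; exact: lt0r_neq0.
apply: cvg_trans (cvg_trans (cvg_app _ right_sub) hder).
apply: near_eq_cvg; near=> h.
by rewrite /= -[h%:A]/(h * 1) mulr1 (addrC h a).
Unshelve. all: by end_near.
Qed.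

Lemma concave_increment_le p u :
  strictly_concave_nonneg p -> deriv_on_nonneg p u ->
  forall a d, 0 <= a -> 0 < d -> p (a + d) - p a <= d * u a.
Proof.
move=> hc hd a d a0 d0; rewrite leNgt; apply/negP => hlt.
set s := (p (a + d) - p a) / d.
have us : u a < s by rewrite /s ltr_pdivlMr // mulrC.
have : \forall h \near 0^'+,
    [/\ 0 < h, h < d & h^-1 * (p (a + h) - p a) < s].
  near=> h; split.
  - by near: h; exact: nbhs_right_gt.
  - by near: h; exact: nbhs_right_lt.
  - by near: h; exact: (cvgr_lt _ (right_quotient_cvg hd a0) _ us).
move=> /filter_ex [h [h0 hd' hs]].
have t01 : 0 <= h / d <= 1.
  by apply/andP; split; [rewrite divr_ge0 ?ltW | rewrite ler_pdivrMr // mul1r ltW].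
have := concave_le hc (addr_ge0 a0 (ltW d0)) a0 t01.
have -> : h / d * (a + d) + (1 - h / d) * a = a + h.
  by field; rewrite lt0r_neq0.
have -> : h / d * p (a + d) + (1 - h / d) * p a = p a + h * s.
  by rewrite /s; field; rewrite lt0r_neq0.
rewrite -lerBrDl => chord.
by move: hs; rewrite ltr_pdivrMl // ltNge chord.
Unshelve. all: by end_near.
Qed.

(* Moving some h in (0, eps) from node j (currently at level c >= eps) to
   node i (currently at level a) strictly increases the total payoff. *)
Definition retraction_profitable (pi pj : R -> R) (a : R) : Prop :=
  forall c eps, 0 < eps <= c ->
    exists2 h, 0 < h < eps & pj c - pj (c - h) < pi (a + h) - pi a.

Lemma profitable_retraction pi ui pj uj :
  deriv_on_nonneg pi ui -> strictly_concave_nonneg pj ->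
  deriv_on_nonneg pj uj -> strictly_decr_nonneg uj ->
  forall a, 0 <= a -> uj 0 <= ui a -> retraction_profitable pi pj a.
Proof.
move=> hdi hcj hdj huj a a0 hu c eps /andP[e0 ec].
set m := eps / 2.
have m0 : 0 < m by rewrite divr_gt0.
have um : uj m < ui a by apply: lt_le_trans hu; exact: huj.
have : \forall h \near 0^'+,
    [/\ 0 < h, h < m & uj m < h^-1 * (pi (a + h) - pi a)].
  near=> h; split.
  - by near: h; exact: nbhs_right_gt.
  - by near: h; exact: nbhs_right_lt.
  - by near: h; exact: (cvgr_gt _ (right_quotient_cvg hdi a0) _ um).
move=> /filter_ex [h [h0 hm hs]].
have hlt : h < eps by rewrite /m in hm; lra.
exists h; first by rewrite h0 hlt.
have ch0 : 0 <= c - h by lra.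
have loss := concave_increment_le hcj hdj ch0 h0; rewrite subrK in loss.
have slope : uj (c - h) <= uj m.
  by apply: decr_le => //; [exact: ltW | rewrite /m in hm *; lra].
apply: (le_lt_trans loss); apply: (@le_lt_trans _ _ (h * uj m)).
  by rewrite ler_pM2l.
by rewrite -ltr_pdivlMl.
Unshelve. all: by end_near.
Qed.

End RealFunctions.

Section Network.
Variables (R : realType) (V : finType).
Implicit Types (x v : V -> R) (P : pred V).

Lemma ssd_flow_eq0 (p u : V -> R -> R) x (i j : V) :
  strictly_decr_nonneg (u i) -> 0 <= x i -> u j (x j) <= u i (x i) ->
  ssd_flow p u x i j = 0.
Proof.
move=> hdec xi0 hle; rewrite /ssd_flow /ssd_y.
case: ifP => [hge|_]; last by rewrite hle !subrr mulr0 subrr maxxx.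
have -> : x i = 0.
  apply/eqP; rewrite eq_le xi0 andbT leNgt; apply/negP => xpos.
  by have := hdec 0 (x i) (lexx 0) xpos; lra.
by rewrite !subrr mulr0 subrr maxxx.
Qed.

Lemma sum_indicator P (a : V) :
  \sum_(k | P k) ((k == a)%:R : R) = (P a)%:R.
Proof.
case Pa: (P a).
  by rewrite (bigD1 a) //= eqxx big1 ?addr0 // => k /andP[_ /negbTE ->].
by rewrite big1 // => k Pk; case: eqP Pk => // ->; rewrite Pa.
Qed.

Definition transfer (i j : V) (h : R) v : V -> R :=
  fun k => v k + h * ((k == i)%:R - (k == j)%:R).

Section Transfer.
Variables (i j : V) (h : R).
Hypothesis nij : i != j.

Lemma transfer_src v : transfer i j h v i = v i + h.
Proof. by rewrite /transfer eqxx (negbTE nij) /=; ring. Qed.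

Lemma transfer_dst v : transfer i j h v j = v j - h.
Proof. by rewrite /transfer eqxx eq_sym (negbTE nij) /=; ring. Qed.

Lemma transfer_other v k : k != i -> k != j -> transfer i j h v k = v k.
Proof. by move=> /negbTE ki /negbTE kj; rewrite /transfer ki kj /=; ring. Qed.

Lemma sum_transfer P v :
  \sum_(k | P k) transfer i j h v k
    = \sum_(k | P k) v k + h * ((P i)%:R - (P j)%:R).
Proof. by rewrite big_split /= -mulr_sumr sumrB !sum_indicator. Qed.

Lemma sum_transfer_apply (F : V -> R -> R) P v :
  \sum_(k | P k) F k (transfer i j h v k)
    = \sum_(k | P k) F k (v k)
      + (P i)%:R * (F i (v i + h) - F i (v i))
      + (P j)%:R * (F j (v j - h) - F j (v j)).
Proof.
have pointwise k : F k (transfer i j h v k)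
    = F k (v k) + (k == i)%:R * (F i (v i + h) - F i (v i))
                + (k == j)%:R * (F j (v j - h) - F j (v j)).
  have [->|ki] := eqVneq k i; first by rewrite transfer_src (negbTE nij) /=; ring.
  have [->|kj] := eqVneq k j; first by rewrite transfer_dst /=; ring.
  by rewrite transfer_other //=; ring.
by rewrite (eq_bigr _ (fun k _ => pointwise k)) !big_split /=
  -!mulr_suml !sum_indicator.
Qed.

End Transfer.

Section NodalBestResponse.
Variables (e : rel V) (p : V -> R -> R) (x : V -> R) (i j : V).
Hypotheses (eirr : irreflexive e) (eij : e i j).

Let nij : i != j.
Proof. by apply: contraTneq eij => ->; rewrite eirr. Qed.

Lemma P2_feasible_transfer (d : V -> R) (h : R) :
  P2_feasible e x i d -> 0 <= h <= d j -> P2_feasible e x i (transfer i j h d).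
Proof.
move=> [dnn dsum] /andP[h0 hdj]; split; last first.
  by rewrite sum_transfer transfer_src // eirr eij /= -dsum; ring.
move=> k hk; have [->|ki] := eqVneq k i.
  by rewrite transfer_src //; apply: addr_ge0 => //; apply: dnn; rewrite eqxx orbT.
have [->|kj] := eqVneq k j; first by rewrite transfer_dst // subr_ge0.
by rewrite transfer_other //; apply: dnn.
Qed.

Lemma P2_feasible_self (d : V -> R) : P2_feasible e x i d -> 0 <= d i <= x i.
Proof.
move=> [dnn dsum]; rewrite dnn ?eqxx ?orbT //= -dsum lerDl.
by apply: sumr_ge0 => k eik; apply: dnn; rewrite eik.
Qed.

Lemma P2_optimizer_no_flow (d : V -> R) :
  0 <= x j -> P2_optimizer e p x i d ->
  retraction_profitable (p i) (p j) (d i) -> d j = 0.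
Proof.
move=> xj0 [feas dopt] gain; have dj0 : 0 <= d j by apply: feas.1; rewrite eij.
apply/eqP; rewrite eq_le dj0 andbT leNgt; apply/negP => djpos.
have level : 0 < d j <= x j + d j by rewrite djpos /=; lra.
have [h /andP[h0 hlt] hgain] := gain _ _ level.
have hrange : 0 <= h <= d j by rewrite !ltW.
have := dopt _ (P2_feasible_transfer feas hrange).
rewrite /P2_obj (sum_transfer_apply _ nij (fun k dk => p k (x k + dk) - p k (x k))).
by rewrite eirr eij transfer_src // mul0r mul1r [x j + (d j - h)]addrA; lra.
Qed.

End NodalBestResponse.

(* [retract_arc i j h d] moves the amount h of flow on the arc (i,j) back
   to the self-loop (i,i): row i of d becomes [transfer i j h (d i)]. *)
Definition retract_arc (i j : V) (h : R) (d : V -> V -> R) : V -> V -> R :=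
  fun k l => d k l + (k == i)%:R * (h * ((l == i)%:R - (l == j)%:R)).

Section NetworkRestricted.
Variables (e : rel V) (p : V -> R -> R) (x : V -> R) (i j : V).
Hypotheses (esym : symmetric e) (eirr : irreflexive e) (eij : e i j).

Let nij : i != j.
Proof. by apply: contraTneq eij => ->; rewrite eirr. Qed.

Lemma P3_feasible_retract (z : V -> R) (d : V -> V -> R) (h : R) :
  P3_feasible e x z d -> 0 <= h <= d i j ->
  P3_feasible e x (transfer i j h z) (retract_arc i j h d).
Proof.
move=> [hz [hrow hnn]] /andP[h0 hdij].
have eji : e j i by rewrite esym.
split; [|split].
- move=> k; rewrite /transfer hz /retract_arc -addrA; congr (_ + _).
  set dk := h * ((k == i)%:R - (k == j)%:R).
  have net l : d l k + (l == i)%:R * dk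
      - (d k l + (k == i)%:R * (h * ((l == i)%:R - (l == j)%:R)))
    = (d l k - d k l) + (l == i)%:R * dk
      - (k == i)%:R * h * ((l == i)%:R - (l == j)%:R) by ring.
  rewrite [RHS](eq_bigr _ (fun l _ => net l)) [RHS]sumrB [in RHS]big_split /=.
  rewrite -addrA; congr (_ + _).
  rewrite -mulr_suml -mulr_sumr sumrB !sum_indicator /dk.
  have [->|ki] := eqVneq k i; first by rewrite orbT eij /=; ring.
  have [->|kj] := eqVneq k j; first by rewrite eji /=; ring.
  by rewrite /=; ring.
- move=> k; rewrite /retract_arc big_split /= -mulr_sumr -mulr_sumr sumrB.
  rewrite !sum_indicator hrow.
  have [->|ki] := eqVneq k i; last by rewrite /=; ring.
  by rewrite orbT eij /=; ring.
- move=> k l hkl; rewrite /retract_arc.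
  have [eki|ki] := eqVneq k i; last by rewrite /= mul0r addr0; apply: hnn.
  subst k.
  have [->|li] := eqVneq l i.
    have dii : 0 <= d i i by apply: hnn; rewrite eqxx orbT.
    by rewrite (negbTE nij) /=; lra.
  have [->|lj] := eqVneq l j; first by rewrite /=; lra.
  by rewrite /= subrr mulr0 mulr0 addr0; apply: hnn.
Qed.

Lemma P3_inflow_le (z : V -> R) (d : V -> V -> R) :
  P3_feasible e x z d -> d i j <= z j.
Proof.
move=> [hz [hrow hnn]].
have -> : z j = \sum_(l | e j l || (l == j)) d l j by rewrite hz sumrB hrow; ring.
rewrite (bigD1 i) /=; last by rewrite esym eij.
rewrite lerDl.
apply: sumr_ge0 => l /andP[hl _]; apply: hnn.
by move: hl; rewrite esym eq_sym orbC.
Qed.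

Lemma Uobj_transfer (z : V -> R) (h : R) :
  Uobj p (transfer i j h z)
    = Uobj p z + (p i (z i + h) - p i (z i)) + (p j (z j - h) - p j (z j)).
Proof.
rewrite /Uobj (sum_transfer_apply _ nij (fun k y => p k y - p k 0) xpredT) /=.
by rewrite !mul1r; ring.
Qed.

Lemma P3_optimizer_no_flow (z : V -> R) (d : V -> V -> R) :
  P3_optimizer e p x z d -> retraction_profitable (p i) (p j) (z i) -> d i j = 0.
Proof.
move=> [feas opt] gain.
have dij0 : 0 <= d i j by apply: feas.2.2; rewrite eij.
apply/eqP; rewrite eq_le dij0 andbT leNgt; apply/negP => dpos.
have level : 0 < d i j <= z j by rewrite dpos P3_inflow_le.
have [h /andP[h0 hlt] hgain] := gain _ _ level.
have hrange : 0 <= h <= d i j by rewrite !ltW.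
have := opt _ _ (P3_feasible_retract feas hrange).
by rewrite Uobj_transfer; lra.
Qed.

End NetworkRestricted.

End Network.

Unset Implicit Arguments. Set Strict Implicit.

Theorem mainTheorem5 (R : realType) (V : finType) (e : rel V)
  (p u : V -> R -> R) (rho : R) (theta x : V -> R) (i j : V) :
  graph_ok e ->
  (forall k, C2_nonneg_with_deriv (p k) (u k)) ->
  (forall k, strictly_concave_nonneg (p k)) ->
  (forall k, strictly_decr_nonneg (u k)) ->
  0 <= rho ->
  (forall k, 0 <= theta k) ->
  in_simplex rho x ->
  e i j ->
  u j 0 <= u i (theta i) ->
  0 <= x i <= theta i ->
  [/\ ssd_flow p u x i j = 0,
      (forall d : V -> R, P2_optimizer e p x i d -> d j = 0) &
      (forall (z : V -> R) (d : V -> V -> R), P3_optimizer e p x z d ->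
         0 <= z i <= theta i -> d i j = 0)].
Proof.
move=> [esym [eirr _]] hC hconc hdecr _ _ [xnn _] eij hu /andP[xi0 xith].
have hd k : deriv_on_nonneg (p k) (u k) by case: (hC k).
have dominant a : 0 <= a -> a <= theta i -> u j 0 <= u i a.
  by move=> a0 ath; apply: le_trans hu (decr_le (hdecr i) a0 ath).
have gain a : 0 <= a -> a <= theta i -> retraction_profitable (p i) (p j) a.
  move=> a0 ath.
  exact: profitable_retraction (hd i) (hconc j) (hd j) (hdecr j) _ a0 (dominant a a0 ath).
split.
- apply: ssd_flow_eq0 => //.
  exact: le_trans (decr_le (hdecr j) (lexx 0) (xnn j)) (dominant _ xi0 xith).
- move=> d dopt; have /andP[di0 dix] := P2_feasible_self dopt.1.
  by have := P2_optimizer_no_flow eirr eij (xnn j) dopt (gain _ di0 (le_trans dix xith)).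
- move=> z d dopt /andP[zi0 zith].
  by have := P3_optimizer_no_flow esym eirr eij dopt (gain _ zi0 zith).
Qed.
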